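(* Let $\alpha,\beta$ be relatively prime positive integers and let $s\ge2$ be an integer. If $n$ is a positive integer with $n>\beta g_{s-1}g_{s-2}$, then $s(n)\ge s$.
   Context: For positive integers $a_1,a_2$, the $(\alpha,\beta)$-walk $w_k(a_1,a_2)$ is given by $w_1=a_1$, $w_2=a_2$, $w_{k+2}=\alpha w_{k+1}+\beta w_k$ ($k\ge1$). For a positive integer $n$, $s(n;a_1,a_2)$ is the (largest) index $s$ with $w_s(a_1,a_2)=n$ ($-\infty$ if none), and $s(n)=\max_{a_1,a_2\ge1}s(n;a_1,a_2)$. The sequence $g_k$: $g_0=0$, $g_1=1$, $g_2=\alpha$, $g_{k+2}=\alpha g_{k+1}+\beta g_k$ for $k\ge1$. *)

From mathcomp Require Import all_boot.
Set Implicit Arguments. Unset Strict Implicit. Unset Printing Implicit Defensive.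

Fixpoint rec_pair (al be x0 x1 k : nat) : nat * nat :=
  match k with
  | 0 => (x0, x1)
  | k'.+1 => let: (x, y) := rec_pair al be x0 x1 k' in (y, al * y + be * x)
  end.

(* The (al,be)-walk, 1-indexed: walk al be a1 a2 1 = a1, walk ... 2 = a2,
   w_{k+2} = al w_{k+1} + be w_k.  (Index 0 is meaningless, = a1.) *)
Definition walk (al be a1 a2 k : nat) : nat := (rec_pair al be a1 a2 k.-1).1.

Definition gseq (al be k : nat) : nat := (rec_pair al be 0 1 k).1.

From mathcomp Require Import all_boot zify.

(* Unrolling the recurrence gives w_{k+2} = be g_k a1 + g_{k+1} a2, so it
   suffices to write n = (be g_k) x + g_{k+1} y with x, y >= 1.  The two
   coefficients are coprime (consecutive terms of g are coprime, and g_{k+1} is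
   prime to be), and every integer larger than the product of two coprime
   positive integers is a positive combination of them: choose x in [1, B] with
   A x = n mod B, then A x <= A B < n and B divides n - A x. *)

Lemma coprime_mul_mod_solvable A B n :
  coprime A B -> exists x, A * x = n %[mod B].
Proof.
move=> co_AB; pose z := chinese A B 0 n.
have /dvdnP[x def_z] : A %| z by rewrite /dvdn chinese_modl // mod0n.
by exists x; rewrite mulnC -def_z chinese_modr.
Qed.

Lemma mod_pos_repr B x0 : 0 < B -> exists2 x, 0 < x <= B & x = x0 %[mod B].
Proof.
move=> B_gt0; have [r0 | r_gt0] := posnP (x0 %% B).
  by exists B; rewrite ?leqnn ?B_gt0 // modnn r0.
by exists (x0 %% B); rewrite ?modn_mod // r_gt0 ltnW ?ltn_pmod.
Qed.

Lemma coprime_pos_combination A B n : 0 < B -> coprime A B -> A * B < n ->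
  exists x y, [/\ 0 < x, 0 < y & A * x + B * y = n].
Proof.
move=> B_gt0 co_AB AB_lt_n.
have [x0 Ax0_n] := coprime_mul_mod_solvable _ _ n co_AB.
have [x /andP[x_gt0 x_le_B] x_x0] := mod_pos_repr _ x0 B_gt0.
have Ax_lt_n : A * x < n by apply: leq_ltn_trans AB_lt_n; rewrite leq_mul2l x_le_B orbT.
have Ax_n : A * x = n %[mod B] by rewrite -modnMmr x_x0 modnMmr Ax0_n.
have /dvdnP[y def_y] : B %| n - A * x.
  by rewrite -eqn_mod_dvd ?Ax_n // ltnW.
exists x, y; split=> //; last by rewrite [B * y]mulnC -def_y subnKC // ltnW.
by rewrite lt0n; apply: contraTneq Ax_lt_n => y0; rewrite -subn_gt0 def_y y0.
Qed.

Lemma rec_pairS al be x0 x1 k :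
  rec_pair al be x0 x1 k.+1 =
  ((rec_pair al be x0 x1 k).2,
   al * (rec_pair al be x0 x1 k).2 + be * (rec_pair al be x0 x1 k).1).
Proof. by rewrite /=; case: rec_pair. Qed.

Lemma gseqSS al be k :
  gseq al be k.+2 = al * gseq al be k.+1 + be * gseq al be k.
Proof. by rewrite /gseq !rec_pairS. Qed.

Lemma rec_pair_gseq al be a1 a2 k :
  rec_pair al be a1 a2 k.+1 =
  (be * a1 * gseq al be k + a2 * gseq al be k.+1,
   be * a1 * gseq al be k.+1 + a2 * gseq al be k.+2).
Proof.
elim: k => [|k IHk]; first by rewrite /gseq /=; congr pair; lia.
rewrite rec_pairS IHk /= (gseqSS al be k.+1) (gseqSS al be k).
congr pair; lia.
Qed.

Lemma walkSS_gseq al be a1 a2 k :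
  walk al be a1 a2 k.+2 = be * a1 * gseq al be k + a2 * gseq al be k.+1.
Proof. by rewrite /walk rec_pair_gseq. Qed.

Lemma gseq_gt0 al be k : 0 < al -> 0 < gseq al be k.+1.
Proof.
move=> al_gt0; elim: k => [|k IHk] //.
by rewrite gseqSS ltn_addr // muln_gt0 al_gt0.
Qed.

Lemma coprime_gseqS_be al be k : coprime al be -> coprime (gseq al be k.+1) be.
Proof.
move=> co_al_be; elim: k => [|k IHk]; first exact: coprime1n.
rewrite gseqSS coprime_sym /coprime addnC [be * _]mulnC gcdnMDl.
by rewrite -/(coprime _ _) coprimeMr coprime_sym co_al_be coprime_sym.
Qed.

Lemma coprime_gseq_gseqS al be k :
  coprime al be -> coprime (gseq al be k) (gseq al be k.+1).
Proof.
move=> co_al_be; elim: k => [|k IHk]; first exact: coprimen1.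
rewrite gseqSS /coprime gcdnMDl -/(coprime _ _).
by rewrite coprimeMr coprime_gseqS_be // coprime_sym.
Qed.

Theorem lemma3p3 (al be s n : nat) :
  0 < al -> 0 < be -> coprime al be -> 2 <= s -> 0 < n ->
  n > be * gseq al be s.-1 * gseq al be s.-2 ->
  exists a1 a2 k, [/\ 0 < a1, 0 < a2, 1 <= k, s <= k & walk al be a1 a2 k = n].
Proof.
move=> al_gt0 _ co_al_be; case: s => [|[|k]] // _ _ /= n_big.
have co_coefs : coprime (be * gseq al be k) (gseq al be k.+1).
  by rewrite coprimeMl coprime_sym coprime_gseqS_be // coprime_gseq_gseqS.
have coefs_lt_n : be * gseq al be k * gseq al be k.+1 < n by rewrite mulnAC.
have [x [y [x_gt0 y_gt0 def_n]]] :=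
  coprime_pos_combination _ _ _ (gseq_gt0 _ be k al_gt0) co_coefs coefs_lt_n.
exists x, y, k.+2; split=> //.
by rewrite walkSS_gseq -def_n mulnAC [y * _]mulnC.
Qed.
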